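(* For all $A,B\in\mathcal A_n(\Bbbk)$ one has $\varphi(A)\,\varphi(B)=\varphi(AB)$ in $A_n(\Bbbk)$; i.e. $\varphi:\mathcal A_n(\Bbbk)\to A_n(\Bbbk)$ is a monoid homomorphism (from matrix multiplication to multiplication in $A_n(\Bbbk)$).
   Context: Let $\Bbbk$ be a field of characteristic zero and $h$ a formal variable. $A_n(\Bbbk)$ denotes the $n$-th Weyl–Heisenberg algebra over $\Bbbk\llbracket h\rrbracket$ ($h$-adically completed), generated by $\mathbf{x}_i,\mathbf{p}_i$ ($1\le i\le n$) with $[\mathbf{x}_i,\mathbf{x}_j]=[\mathbf{p}_i,\mathbf{p}_j]=0$, $[\mathbf{p}_i,\mathbf{x}_j]=\delta_{ij}$. The normal ordering map $\mathcal N$ is the $\Bbbk\llbracket h\rrbracket$-linear, $h$-adically continuous map from the commutative ring $\Bbbk\llbracket h\rrbracket[x_1,\dots,x_n,p_1,\dots,p_n]$ (completed) to $A_n(\Bbbk)$ sending $\prod_i x_i^{\alpha_i}p_i^{\beta_i}\mapsto(\prod_i\mathbf{x}_i^{\alpha_i})(\prod_j\mathbf{p}_j^{\beta_j})$. Let $\mathcal A_n(\Bbbk):=\{\exp(hX):X\in\mathrm{Mat}_n(\Bbbk\llbracket h\rrbracket)\}$, a monoid under matrix multiplication, and define $\varphi:\mathcal A_n(\Bbbk)\to A_n(\Bbbk)$ by $\varphi(A)=\mathcal N\big(\exp(x^{\top}(A-\mathbf 1)p)\big)$, where $x^{\top}(A-\mathbf1)p=\sum_{k,l}x_k(A-\mathbf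 1)_{kl}p_l$. *)

From HB Require Import structures.
From mathcomp Require Import all_boot all_order all_algebra.
From mathcomp Require Import mpoly.
Set Implicit Arguments. Unset Strict Implicit. Unset Printing Implicit Defensive.
Import GRing.Theory.
Local Open Scope ring_scope.

(* Formal power series in h with coefficients in R, R[[h]], represented by  *)
(* their coefficient sequence: f = \sum_m h^m (f m).                         *)
Definition hps (R : Type) := nat -> R.

Definition hps_mul (R : pzSemiRingType) (f g : hps R) : hps R :=
  fun m => \sum_(i < m.+1) f i * g (m - i)%N.

Definition hps_one (R : pzSemiRingType) : hps R := fun m => if m == 0%N then 1 else 0.

Fixpoint hps_pow (R : pzSemiRingType) (f : hps R) (j : nat) : hps R :=
  if j is j'.+1 then hps_mul f (hps_pow f j') else hps_one R.

Definition hps_h (R : pzSemiRingType) (f : hps R) : hps R :=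
  fun m => if m is m'.+1 then f m' else 0.

(* h-adic exponential exp(f) = \sum_j f^j / j!, for f with zero constant     *)
(* term (f 0 = 0); then (f^j) m = 0 for j > m, so the coefficient of h^m is  *)
(* the finite sum below.  Scalars 1/j! are taken in the base field K and act *)
(* on R through the K-scalar multiplication [scal] of R (always instantiated *)
(* below with the library's *:, R being a K-algebra).                        *)
Definition hps_exp (K : fieldType) (R : pzSemiRingType) (scal : K -> R -> R)
    (f : hps R) : hps R :=
  fun m => \sum_(j < m.+1) scal (j`!%:R)^-1 (hps_pow f j m).

(* Matrices over k[[h]]: Mat_n(k[[h]]) = (Mat_n(k))[[h]].                    *)
Definition hmat (k : fieldType) (n : nat) := hps 'M[k]_n.

Definition exph (k : fieldType) (n : nat) (X : hmat k n) : hmat k n :=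
  @hps_exp k 'M[k]_n (fun c M => c *: M) (@hps_h 'M[k]_n X).

Definition calA (k : fieldType) (n : nat) (A : hmat k n) : Prop :=
  exists X : hmat k n, A = exph X.

(* The commutative ring k[x_1..x_n,p_1..p_n] = {mpoly k[n + n]}, with       *)
(* x_i = 'X_(lshift n i) and p_i = 'X_(rshift n i); its h-adic completion   *)
(* k[[h]][x,p]^ is hps {mpoly k[n+n]}.                                       *)
Definition xvar (k : fieldType) (n : nat) (i : 'I_n) : {mpoly k[n + n]} :=
  'X_(lshift n i).
Definition pvar (k : fieldType) (n : nat) (i : 'I_n) : {mpoly k[n + n]} :=
  'X_(rshift n i).

Definition xCp (k : fieldType) (n : nat) (C : hmat k n) : hps {mpoly k[n + n]} :=
  fun m => \sum_(i < n) \sum_(j < n) (C m i j) *: (xvar k i * pvar k j).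

Definition hmat_sub1 (k : fieldType) (n : nat) (A : hmat k n) : hmat k n :=
  fun m => A m - hps_one 'M[k]_n m.

(* The Weyl algebra A_n(k) over k[[h]] (h-adically completed).  In          *)
(* characteristic zero the Weyl algebra over k is (faithfully) the algebra  *)
(* of polynomial differential operators on k[x_1..x_n], with x_i acting by  *)
(* multiplication and p_i by d/dx_i (so [p_i, x_j] = delta_ij).  Its        *)
(* h-adic completion over k[[h]] consists of series \sum_m h^m D_m, which   *)
(* we represent by the sequence (D_m) of operators; multiplication is the   *)
(* Cauchy product of compositions.                                          *)
Definition diffop (k : fieldType) (n : nat) := {mpoly k[n]} -> {mpoly k[n]}.

Definition weyl (k : fieldType) (n : nat) := hps (diffop k n).

Definition weyl_mul (k : fieldType) (n : nat) (a b : weyl k n) : weyl k n :=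
  fun m f => \sum_(i < m.+1) a i (b (m - i)%N f).

Definition xpart (n : nat) (m : 'X_{1.. n + n}) : 'X_{1.. n} :=
  [multinom m (lshift n i) | i < n].
Definition ppart (n : nat) (m : 'X_{1.. n + n}) : 'X_{1.. n} :=
  [multinom m (rshift n i) | i < n].

Definition normal_ord (k : fieldType) (n : nat) (P : {mpoly k[n + n]}) : diffop k n :=
  fun f => \sum_(m <- msupp P) P@_m *: ('X_[xpart m] * mderivm (ppart m) f).

Definition Nh (k : fieldType) (n : nat) (P : hps {mpoly k[n + n]}) : weyl k n :=
  fun m => normal_ord (P m).

Definition phi (k : fieldType) (n : nat) (A : hmat k n) : weyl k n :=
  Nh (@hps_exp k {mpoly k[n + n]} (fun c P => c *: P) (xCp (hmat_sub1 A))).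

(* On k[x], phi(A) acts h-coefficientwise as the substitution f(x) |-> f(A^T x).
   With u = x^T (A - 1) p, the series E = exp(u) satisfies E' = u' E (derivative
   in h), and normal ordering turns x_a p_b Q into x_a N(Q)(d/dx_b .).  Hence the
   h-coefficients of phi(A) f obey the first-order recursion that the chain rule
   gives for the h-coefficients of f(A^T x), and in characteristic zero this
   recursion determines them.  Composing substitutions, phi(A) phi(B) f =
   f(B^T A^T x) = f((AB)^T x) = phi(AB) f, all series truncated mod h^(M+1). *)

From HB Require Import structures.
From mathcomp Require Import all_boot all_order all_algebra.
From mathcomp Require Import mpoly ssrcomplements.
From Stdlib Require Import FunctionalExtensionality.
Set Implicit Arguments. Unset Strict Implicit. Unset Printing Implicit Defensive.
Import GRing.Theory.
Local Open Scope ring_scope.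

Section NormalOrdering.
Variables (k : fieldType) (n : nat).
Implicit Types (P Q : {mpoly k[n + n]}) (f : {mpoly k[n]}) (m : 'X_{1.. n + n}).

Lemma normal_ord_widen P f w : (msize P <= w)%N ->
  normal_ord P f =
    \sum_(m : 'X_{1.. (n + n) < w}) P@_m *: ('X_[xpart m] * mderivm (ppart m) f).
Proof.
pose I : subFinType _ := 'X_{1.. (n + n) < w}.
move=> le_Pw; rewrite /normal_ord (big_mksub I) ?msupp_uniq //=; last first.
  by move=> m /msize_mdeg_lt/leq_trans; apply.
by rewrite big_rmcond //= => m /memN_msupp_eq0 ->; rewrite scale0r.
Qed.

Lemma normal_ordD P Q f : normal_ord (P + Q) f = normal_ord P f + normal_ord Q f.
Proof.
pose w := (msize P + msize Q + msize (P + Q))%N.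
rewrite !(@normal_ord_widen _ _ w) ?leq_addl // /w; first last.
- by rewrite -addnA leq_addr.
- by rewrite -addnA addnCA leq_addr.
by rewrite -big_split; apply: eq_bigr => m _; rewrite mcoeffD scalerDl.
Qed.

Lemma normal_ordZ c P f : normal_ord (c *: P) f = c *: normal_ord P f.
Proof.
pose w := (msize P + msize (c *: P))%N.
rewrite !(@normal_ord_widen _ _ w) ?leq_addl ?leq_addr // scaler_sumr.
by apply: eq_bigr => m _; rewrite mcoeffZ scalerA.
Qed.

Lemma normal_ord0 f : normal_ord 0 f = 0.
Proof. by rewrite /normal_ord msupp0 big_nil. Qed.

Lemma normal_ord_sum I (r : seq I) (F : I -> {mpoly k[n + n]}) f :
  normal_ord (\sum_(i <- r) F i) f = \sum_(i <- r) normal_ord (F i) f.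
Proof. exact: (big_morph _ (fun P Q => normal_ordD P Q f) (normal_ord0 f)). Qed.

Lemma normal_ordMn P j f : normal_ord (P *+ j) f = normal_ord P f *+ j.
Proof.
elim: j => [|j IHj]; first by rewrite !mulr0n normal_ord0.
by rewrite !mulrS normal_ordD IHj.
Qed.

Lemma normal_ordX m f : normal_ord 'X_[m] f = 'X_[xpart m] * mderivm (ppart m) f.
Proof. by rewrite /normal_ord msuppX big_seq1 mcoeffX eqxx scale1r. Qed.

Lemma normal_ord1 f : normal_ord 1 f = f.
Proof.
have xpart0 : xpart (0 : 'X_{1.. n + n})%MM = 0%MM.
  by apply/mnmP => i; rewrite !mnmE.
have ppart0 : ppart (0 : 'X_{1.. n + n})%MM = 0%MM.
  by apply/mnmP => i; rewrite !mnmE.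
by rewrite -mpolyX0 normal_ordX xpart0 ppart0 mpolyX0 mul1r mderivm0m.
Qed.

Lemma xpartD m1 m2 : xpart (m1 + m2)%MM = (xpart m1 + xpart m2)%MM.
Proof. by apply/mnmP => i; rewrite !mnmE. Qed.

Lemma ppartD m1 m2 : ppart (m1 + m2)%MM = (ppart m1 + ppart m2)%MM.
Proof. by apply/mnmP => i; rewrite !mnmE. Qed.

Lemma xpart_lshift (a : 'I_n) : xpart U_(lshift n a)%MM = U_(a)%MM.
Proof. by apply/mnmP => i; rewrite mnmE !mnm1E (inj_eq (@lshift_inj _ _)). Qed.

Lemma ppart_lshift (a : 'I_n) : ppart U_(lshift n a)%MM = 0%MM.
Proof. by apply/mnmP => i; rewrite mnmE mnm1E mnm0E eq_lrshift. Qed.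

Lemma xpart_rshift (a : 'I_n) : xpart U_(rshift n a)%MM = 0%MM.
Proof. by apply/mnmP => i; rewrite mnmE mnm1E mnm0E eq_rlshift. Qed.

Lemma ppart_rshift (a : 'I_n) : ppart U_(rshift n a)%MM = U_(a)%MM.
Proof. by apply/mnmP => i; rewrite mnmE !mnm1E (inj_eq (@rshift_inj _ _)). Qed.

Lemma normal_ord_xpM (a b : 'I_n) Q f :
  normal_ord (xvar k a * pvar k b * Q) f = 'X_a * normal_ord Q f^`M(b).
Proof.
rewrite [Q]mpolyE mulr_sumr !normal_ord_sum mulr_sumr; apply: eq_bigr => m _.
rewrite -scalerAr !normal_ordZ -scalerAr; congr (_ *: _).
rewrite /xvar /pvar -!mpolyXD !normal_ordX !xpartD !ppartD.
rewrite xpart_lshift xpart_rshift ppart_lshift ppart_rshift !add0m addm0.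
by rewrite mpolyXD mulrA mderivmDm mderivmU1m.
Qed.

End NormalOrdering.

Section HpsExp.
Variables (K : fieldType) (R : comAlgType K).
Hypothesis char0 : [pchar K] =i pred0.
Variable u : hps R.
Hypothesis u0 : u 0%N = 0.

Local Notation E := (hps_exp (fun c (x : R) => c *: x) u).
Let U M : {poly R} := \poly_(i < M.+1) u i.
Let c j : R := (j`!%:R^-1 : K)%:A.
Let Ep M L : {poly R} := \sum_(j < L) (c j)%:P * U M ^+ j.

Lemma hps_pow_coef M j s : (s <= M)%N -> hps_pow u j s = (U M ^+ j)`_s.
Proof.
elim: j s => [|j IHj] s le_sM /=.
  by rewrite expr0 coef1 /hps_one; case: (s == 0%N).
rewrite exprS coefM; apply: eq_bigr => -[i /= lt_is] _.
rewrite IHj ?(leq_trans (leq_subr _ _) le_sM) // coef_poly ltnS.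
by rewrite (leq_trans _ le_sM) // -ltnS.
Qed.

Lemma coef_trunc_exp_small M j s : (s < j)%N -> (U M ^+ j)`_s = 0.
Proof.
have -> : U M = \poly_(i < M) u i.+1 * 'X.
  by apply/polyP => -[|i]; rewrite coefMX !coef_poly //= u0 if_same.
by rewrite exprMn_comm ?coefMXn => [->|]; last exact: mulrC.
Qed.

Lemma coef_trunc_exp M L s : (s <= M)%N -> (s < L)%N -> (Ep M L)`_s = E s.
Proof.
move=> le_sM lt_sL; rewrite coef_sum /hps_exp.
rewrite (big_ord_widen L (fun j => (j`!%:R^-1 : K) *: hps_pow u j s) lt_sL).
rewrite [RHS]big_mkcond /=; apply: eq_bigr => j _; rewrite coefCM.
case: ifP => [_|lt_sj]; first by rewrite (hps_pow_coef j le_sM) mulr_algl.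
by rewrite coef_trunc_exp_small ?mulr0 // ltnNge -ltnS lt_sj.
Qed.

Lemma deriv_trunc_exp M L : (Ep M L.+1)^`() = (U M)^`() * Ep M L.
Proof.
have cS j : c j.+1 *+ j.+1 = c j.
  rewrite /c scalerMnl factS natrM invfM -mulr_natr mulrAC mulVf ?mul1r //.
  by move/pcharf0P: char0 => ->.
rewrite /Ep raddf_sum big_ord_recl /= expr0 mulr1 derivC add0r mulr_sumr.
apply: eq_bigr => j _; rewrite derivE deriv_exp /= -(cS j) polyCMn.
by rewrite mulrnAl !mulrnAr mulrCA.
Qed.

Lemma hps_exp_rec r :
  E r.+1 *+ r.+1 = \sum_(i < r.+1) (u i.+1 *+ i.+1) * E (r - i)%N.
Proof.
rewrite -(@coef_trunc_exp r.+1 r.+2) // -coef_deriv deriv_trunc_exp coefM.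
apply: eq_bigr => -[i /= lt_ir] _.
rewrite coef_deriv coef_poly ltnS lt_ir coef_trunc_exp //.
  by rewrite (leq_trans (leq_subr _ _)).
by rewrite ltnS leq_subr.
Qed.

End HpsExp.

Section SubstDeriv.
Variables (R S : comNzRingType) (n : nat).
Variables (f : {rmorphism R -> S}) (y : 'I_n -> {poly S}).
Local Notation sub := (mmap (polyC \o f) y).

Lemma deriv_mmap p :
  (sub p)^`() = \sum_(l < n) (y l)^`() * sub p^`M(l).
Proof.
pose chain q := (sub q)^`() = \sum_(l < n) (y l)^`() * sub q^`M(l).
have chainC c : chain c%:MP.
  by rewrite /chain mmapC derivC big1 // => l _; rewrite mderivC raddf0 mulr0.
have chainD q1 q2 : chain q1 -> chain q2 -> chain (q1 + q2).
  rewrite /chain raddfD derivD => -> ->; rewrite -big_split /=.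
  by apply: eq_bigr => l _; rewrite mderivD raddfD mulrDr.
have chainM q1 q2 : chain q1 -> chain q2 -> chain (q1 * q2).
  rewrite /chain rmorphM derivM => -> ->; rewrite mulr_suml mulr_sumr -big_split.
  apply: eq_bigr => l _; rewrite mderivM rmorphD !rmorphM mulrDr !mulrA.
  by rewrite [_ * (y l)^`()]mulrC.
have chainX i : chain 'X_i.
  have subUU : (U_(i) - U_(i))%MM = 0%MM.
    by apply/mnmP => j; rewrite mnmBE subnn mnm0E.
  rewrite /chain mmapX mmap1U (bigD1 i) //= big1 ?addr0 => [|l /negbTE ne_li].
    by rewrite mderivX mnm1E eqxx subUU mpolyX0 scale1r rmorph1 mulr1.
  by rewrite mderivX mnm1E eq_sym ne_li scale0r raddf0 mulr0.
rewrite [p]mpolyE; apply: (big_ind chain) => [|q1 q2|m _].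
- by rewrite -mpolyC0.
- exact: chainD.
rewrite -mul_mpolyC mpolyXE_id; apply: (chainM _ _ (chainC _)).
apply: (big_ind chain) => [|q1 q2|i _].
- by rewrite -mpolyC1.
- exact: chainM.
by elim: (m i) => [|e IHe]; rewrite ?expr0 -?mpolyC1 // exprS; apply: (chainM).
Qed.

End SubstDeriv.

Lemma rmorph_mmap n (R S T : comNzRingType) (f : {rmorphism R -> S})
    (g : {rmorphism S -> T}) (h : 'I_n -> S) (p : {mpoly R[n]}) :
  g (mmap f h p) = mmap (g \o f) (g \o h) p.
Proof.
rewrite /mmap rmorph_sum; apply: eq_bigr => m _.
rewrite rmorphM rmorph_prod; congr (_ * _).
by apply: eq_bigr => i _; rewrite rmorphXn.
Qed.

Lemma pchar0_natmulI (K : fieldType) (V : lmodType K) (m : nat) (x y : V) :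
  [pchar K] =i pred0 -> x *+ m.+1 = y *+ m.+1 -> x = y.
Proof.
move=> char0; rewrite -!scaler_nat => /scalerI; apply.
by move/pcharf0P: char0 => ->.
Qed.

Section PhiSubst.
Variables (k : fieldType) (n : nat).
Implicit Types (A : hmat k n) (f : {mpoly k[n]}).

Definition xTA A (i : nat) (l : 'I_n) : {mpoly k[n]} := \sum_(t < n) A i t l *: 'X_t.

Definition xTA_poly A (M : nat) (l : 'I_n) : {poly {mpoly k[n]}} :=
  \poly_(i < M.+1) xTA A i l.

(* f(A^T x), with A truncated modulo h^(M+1), as a polynomial in h. *)
Definition xsubst A M := mmap (polyC \o @mpolyC n k) (xTA_poly A M).
HB.instance Definition _ A M := GRing.RMorphism.on (xsubst A M).

Lemma xTA0 A l : A 0%N = 1 -> xTA A 0 l = 'X_l.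
Proof.
move=> A0; rewrite /xTA A0 (bigD1 l) //= mxE eqxx scale1r big1 ?addr0 //.
by move=> t /negbTE ne_tl; rewrite mxE ne_tl scale0r.
Qed.

Lemma phi_coef0 A f : phi A 0 f = f.
Proof.
rewrite /phi /Nh /hps_exp big_ord1 /= /hps_one /= invr1 scale1r.
exact: normal_ord1.
Qed.

Lemma phi_rec A : [pchar k] =i pred0 -> A 0%N = 1 -> forall r f,
  phi A r.+1 f *+ r.+1 =
  \sum_(i < r.+1) \sum_(l < n) (xTA A i.+1 l *+ i.+1) * phi A (r - i)%N f^`M(l).
Proof.
move=> char0 A0 r f; have u0 : xCp (hmat_sub1 A) 0 = 0.
  rewrite /xCp big1 // => i _; rewrite big1 // => j _.
  by rewrite /hmat_sub1 A0 subrr mxE scale0r.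
rewrite /phi /Nh -normal_ordMn (hps_exp_rec char0 u0) normal_ord_sum.
apply: eq_bigr => i _; rewrite mulrnAl normal_ordMn.
under [RHS]eq_bigr do rewrite mulrnAl.
rewrite sumrMnl; congr (_ *+ _).
rewrite /xCp mulr_suml normal_ord_sum.
under eq_bigr do rewrite mulr_suml normal_ord_sum.
rewrite exchange_big /=; apply: eq_bigr => l _.
rewrite /xTA mulr_suml; apply: eq_bigr => t _.
rewrite -scalerAl normal_ordZ normal_ord_xpM -scalerAl.
by rewrite /hmat_sub1 /hps_one /= subr0.
Qed.

Lemma xsubst_rec A M r f : (r < M)%N ->
  (xsubst A M f)`_r.+1 *+ r.+1 =
  \sum_(i < r.+1) \sum_(l < n)
    (xTA A i.+1 l *+ i.+1) * (xsubst A M f^`M(l))`_(r - i)%N.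
Proof.
move=> lt_rM; rewrite -coef_deriv /xsubst deriv_mmap coef_sum.
under eq_bigr do rewrite coefM.
rewrite exchange_big /=; apply: eq_bigr => -[i /= lt_ir] _; apply: eq_bigr => l _.
rewrite coef_deriv coef_poly ltnS (leq_trans _ lt_rM) //.
Qed.

Lemma xsubst_coef0 A M f : A 0%N = 1 -> (xsubst A M f)`_0 = f.
Proof.
move=> A0; rewrite -horner_coef0 -horner_evalE rmorph_mmap [RHS]mpolyE /mmap.
apply: eq_bigr => m _; rewrite /= horner_evalE hornerC mul_mpolyC mpolyXE_id.
congr (_ *: _); apply: eq_bigr => i _.
by rewrite /= horner_evalE horner_coef0 coef_poly xTA0.
Qed.

Lemma phi_xsubst A M r f : [pchar k] =i pred0 -> A 0%N = 1 -> (r <= M)%N ->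
  phi A r f = (xsubst A M f)`_r.
Proof.
move=> char0 A0; elim/ltn_ind: r f => -[|r] IHr f le_rM.
  by rewrite phi_coef0 xsubst_coef0.
apply: (@pchar0_natmulI k _ r) => //.
rewrite phi_rec // xsubst_rec //; apply: eq_bigr => -[i /= lt_ir] _.
apply: eq_bigr => l _; rewrite IHr // ?ltnS ?leq_subr //.
exact: leq_trans (leq_subr _ _) (ltnW le_rM).
Qed.

End PhiSubst.

Section TruncatedEq.
Variable R : comNzRingType.

Definition eq_upto (M : nat) (P Q : {poly R}) := forall r, (r <= M)%N -> P`_r = Q`_r.

Lemma eq_upto_mul M P P' Q Q' :
  eq_upto M P P' -> eq_upto M Q Q' -> eq_upto M (P * Q) (P' * Q').
Proof.
move=> eqP eqQ r le_rM; rewrite !coefM; apply: eq_bigr => -[i /= lt_ir] _.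
rewrite eqP ?eqQ ?(leq_trans (leq_subr _ _) le_rM) //.
by apply: leq_trans le_rM; rewrite -ltnS.
Qed.

Lemma eq_upto_mmap n (S : nzRingType) (f1 f2 : {rmorphism S -> {poly R}})
    (h1 h2 : 'I_n -> {poly R}) M (p : {mpoly S[n]}) :
  f1 =1 f2 -> (forall l, eq_upto M (h1 l) (h2 l)) ->
  eq_upto M (mmap f1 h1 p) (mmap f2 h2 p).
Proof.
move=> eq_f eq_h r le_rM; rewrite !coef_sum; apply: eq_bigr => m _.
rewrite eq_f; apply: (eq_upto_mul _ _ le_rM) => [//|].
apply: (big_ind2 (eq_upto M)) => [//|P P' Q Q'|i _]; first exact: eq_upto_mul.
by elim: (m i) => [|e IHe]; rewrite ?expr0 // !exprS; apply: eq_upto_mul.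
Qed.

End TruncatedEq.

Section Composition.
Variables (k : fieldType) (n : nat) (A B : hmat k n) (M : nat).

Fact xsubst_commr_X : commr_rmorph (xsubst A M) 'X.
Proof. by move=> p; apply: mulrC. Qed.

Definition hxsubst := horner_morph xsubst_commr_X.

Lemma coef_hxsubst G r :
  (hxsubst G)`_r = \sum_(i < r.+1) (xsubst A M G`_(r - i))`_i.
Proof.
rewrite /hxsubst /horner_morph (@horner_coef_wide _ (size G + r.+1)); last first.
  exact: leq_trans (size_poly _ _) (leq_addr _ _).
rewrite coef_sum [RHS](reindex_inj rev_ord_inj) /=.
under [RHS]eq_bigr => j _ do rewrite subSS (subKn (leq_ord j)).
rewrite (big_ord_widen (size G + r.+1) (fun j => (xsubst A M G`_j)`_(r - j))
  (leq_addl _ _)).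
rewrite [RHS]big_mkcond /=; apply: eq_bigr => j _.
by rewrite coefMXn coef_map ltnS; case: leqP.
Qed.

Lemma hxsubst_const (c : k) : hxsubst c%:MP%:P = c%:MP%:P.
Proof. by rewrite /hxsubst horner_morphC; apply: mmapC. Qed.

Lemma xTA_mul r l :
  xTA (hps_mul A B) r l = \sum_(i < r.+1) \sum_(t < n) B (r - i)%N t l *: xTA A i t.
Proof.
rewrite /xTA /hps_mul.
under eq_bigr => s _ do rewrite summxE scaler_suml.
rewrite exchange_big; apply: eq_bigr => i _.
under eq_bigr => s _ do rewrite -mulmxE mxE scaler_suml.
rewrite exchange_big; apply: eq_bigr => t _.
by rewrite scaler_sumr; apply: eq_bigr => s _; rewrite scalerA mulrC.
Qed.

Lemma hxsubst_xTA_poly l :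
  eq_upto M (hxsubst (xTA_poly B M l)) (xTA_poly (hps_mul A B) M l).
Proof.
move=> r le_rM; rewrite coef_hxsubst coef_poly ltnS le_rM xTA_mul.
apply: eq_bigr => -[i /= lt_ir] _.
rewrite coef_poly ltnS (leq_trans (leq_subr _ _) le_rM) /xsubst [xTA B _ _]/xTA.
rewrite raddf_sum coef_sum /=; apply: eq_bigr => t _.
rewrite mmapZ mmapX mmap1U /= coefCM coef_poly ltnS.
by rewrite (leq_trans (ltnSE lt_ir) le_rM) mul_mpolyC.
Qed.

Lemma hxsubst_xsubst f :
  eq_upto M (hxsubst (xsubst B M f)) (xsubst (hps_mul A B) M f).
Proof.
rewrite /hxsubst [xsubst B M f]/xsubst rmorph_mmap.
apply: eq_upto_mmap => [c|l]; [exact: hxsubst_const | exact: hxsubst_xTA_poly].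
Qed.

End Composition.

Lemma calA_coef0 (k : fieldType) (n : nat) (A : hmat k n) : calA A -> A 0%N = 1.
Proof. by case=> X ->; rewrite /exph /hps_exp big_ord1 /= invr1 scale1r. Qed.

Theorem theorem3p10 (k : fieldType) (n : nat)
    (char0 : [pchar k] =i pred0) (A B : hmat k n) :
  calA A -> calA B ->
  weyl_mul (phi A) (phi B) = phi (hps_mul A B).
Proof.
move=> /calA_coef0 A0 /calA_coef0 B0.
have AB0 : hps_mul A B 0%N = 1 by rewrite /hps_mul big_ord1 A0 B0 mul1r.
apply: functional_extensionality => m; apply: functional_extensionality => f.
rewrite (phi_xsubst _ char0 AB0 (leqnn m)) -hxsubst_xsubst // coef_hxsubst.
apply: eq_bigr => -[i /= lt_im] _.
rewrite (phi_xsubst _ char0 B0 (leq_subr i m)).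
by rewrite (phi_xsubst _ char0 A0 (ltnSE lt_im)).
Qed.
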